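(* Let $\tilde h_n(q)=q^{n(n-1)/2}h_n(q^{-1})$ for $n\ge 0$ and $\tilde h(q,s)=\sum_{n\ge0}\tilde h_n(q)s^n$. Then, as formal power series in $s$, $$\tilde h(q,s)=\cfrac{1}{1-\gamma_0 s-\cfrac{\lambda_0 s^2}{1-\gamma_1 s-\cfrac{\lambda_1 s^2}{1-\gamma_2 s-\cdots}}},\qquad \gamma_m=\binom{m+1}{1}_{\!q}^{2},\quad \lambda_m=q\binom{m+2}{2}_{\!q}^{2}\ (m\ge0),$$ i.e. $$\tilde h(q,s)=\cfrac{1}{1-s-\cfrac{qs^2}{1-\binom{2}{1}_q^2 s-\cfrac{q\binom{3}{2}_q^2s^2}{1-\binom{3}{1}_q^2s-\cfrac{q\binom{4}{2}_q^2s^2}{1-\binom{4}{1}_q^2 s-\cdots}}}}.$$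
   Context: Gaussian binomial coefficients: for $m\ge k\ge 0$, $\binom{m}{k}_q=\frac{[m]_q!}{[k]_q!\,[m-k]_q!}$ with $[m]_q!=\prod_{i=1}^m\frac{1-q^i}{1-q}$; set $\binom{m}{k}_q=0$ if $k>m$ or $k<0$. Let $W$ be an $n$-dimensional complex vector space with basis $w_1,\dots,w_n$, and $pr_k:W\to W$ the projection with $pr_k(\sum_i c_iw_i)=\sum_{i\ne k}c_iw_i$. The degenerate flag variety $\mathrm{Fl}^a_n$ is the variety of tuples $(V_1,\dots,V_{n-1})$ of subspaces of $W$ with $\dim V_k=k$ and $pr_{k+1}V_k\subset V_{k+1}$ for $k=1,\dots,n-2$. It admits a cellular decomposition into complex affine cells, so its Poincaré polynomial $P(t)$ involves only even powers of $t$; define $h_n(q)=P(q^{1/2})$, a polynomial of degree $n(n-1)/2$ with $h_0(q)=h_1(q)=1$. It is known (Cerulli Irelli–Feigin–Reineke) that $$h_n(q)=\sum_{f_1,\dots,f_{n-1}\ge 0} q^{\sum_{k=1}^{n-1}(k-f_k)(1-f_k+f_{k+1})}\prod_{k=1}^{n-1}\binom{1+f_{k-1}}{f_k}_{\!q}\prod_{k=1}^{n-1}\binom{1+f_{k+1}}{f_k}_{\!q},$$ with the convention $f_0=f_n=0$. *)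

(* Polynomials in q are {poly rat}; formal power series in s
   with coefficients in {poly rat} are functions nat -> {poly rat}. *)
From HB Require Import structures.
From mathcomp Require Import all_boot all_order all_algebra.
Set Implicit Arguments. Unset Strict Implicit. Unset Printing Implicit Defensive.
Import Order.TTheory GRing.Theory Num.Theory.
Local Open Scope ring_scope.

Definition qint (i : nat) : {poly rat} := \sum_(j < i) 'X^j.
Definition qfact (m : nat) : {poly rat} := \prod_(i < m) qint i.+1.
Definition qbin (m k : nat) : {poly rat} :=
  if (k <= m)%N then qfact m %/ (qfact k * qfact (m - k)) else 0.

(* f : {ffun 'I_m -> 'I_n} encodes (f_1,...,f_m); fv f k = f_k, with
   f_0 = 0 and f_k = 0 for k > m. *)
Definition fv (m n : nat) (f : {ffun 'I_m -> 'I_n}) (k : nat) : nat :=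
  match k with
  | 0 => 0%N
  | k'.+1 => if insub k' is Some i then nat_of_ord (f i) else 0%N
  end.

Definition hexp (n : nat) (f : {ffun 'I_n.-1 -> 'I_n}) : nat :=
  (\sum_(k < n.-1) (k.+1 - fv f k.+1) * (1 + fv f k.+2 - fv f k.+1))%N.

(* Cerulli Irelli–Feigin–Reineke formula for h_n(q); the f_k range over
   0 <= f_k < n (all other tuples give zero terms). *)
Definition h (n : nat) : {poly rat} :=
  \sum_(f : {ffun 'I_n.-1 -> 'I_n})
     'X^(hexp f) *
     \prod_(k < n.-1) (qbin (1 + fv f k) (fv f k.+1)
                       * qbin (1 + fv f k.+2) (fv f k.+1)).

(* htilde_n(q) = q^(n(n-1)/2) h_n(q^-1), i.e. the coefficient reversal of h_n
   with respect to degree N = n(n-1)/2 (deg h_n = N). *)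
Definition htilde (n : nat) : {poly rat} :=
  let N := ((n * n.-1) %/ 2)%N in \poly_(i < N.+1) (h n)`_(N - i).

Definition fps := nat -> {poly rat}.
Definition fconst (c : {poly rat}) : fps := fun n => if n is 0 then c else 0.
Definition fs : fps := fun n => (n == 1%N)%:R.
Definition fsub (a b : fps) : fps := fun n => a n - b n.
Definition fmul (a b : fps) : fps := fun n => \sum_(i < n.+1) a i * b (n - i)%N.

(* F is a tail system of the J-fraction with coefficients gam, lam:
   F_m * (1 - gam_m s - lam_m s^2 F_{m+1}) = 1 for all m, i.e.
   F_m = 1/(1 - gam_m s - lam_m s^2 F_{m+1}).  The value of the infinite
   continued fraction is F_0 (such a system exists and is unique). *)
Definition jfrac_system (gam lam : nat -> {poly rat}) (F : nat -> fps) : Prop :=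
  forall m : nat,
    fmul (F m) (fsub (fsub (fconst 1) (fmul (fconst (gam m)) fs))
                     (fmul (fconst (lam m)) (fmul (fmul fs fs) (F m.+1))))
    =1 fconst 1.

Definition gam (m : nat) : {poly rat} := qbin m.+1 1 ^+ 2.
Definition lam (m : nat) : {poly rat} := 'X * qbin m.+2 2 ^+ 2.

(* The proof is Flajolet's combinatorial theory of continued fractions.
   Because qbin (1 + a) b vanishes for b > a + 1, every summand of the
   Cerulli Irelli-Feigin-Reineke formula for h_n is a product of weights of
   the steps f_j -> f_{j+1} of a Motzkin path 0 = f_0, ..., f_n = 0, so h_n is
   a weighted count of Motzkin paths (h_motzkin).  Substituting q^-1 for q and
   conjugating by the diagonal gauge q^(C(a,2) - C(j,2) - j a) turns these
   time-dependent weights into the Jacobi weights gamma_a (level step at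
   height a), q [a+2 choose 2]_q (up step) and [a+2 choose 2]_q (down step);
   with a degree bound this identifies htilde_n with the Jacobi path count
   (htilde_motzkin).  The first-passage decomposition of Jacobi paths shows
   that their generating functions at all base heights form a tail system of
   the J-fraction (jfrac_rec_motzkin), and a tail system is determined by its
   coefficient recursion (jfrac_rec_unique). *)

From HB Require Import structures.
From mathcomp Require Import all_boot all_order all_algebra.
From mathcomp Require Import zify ring.
Set Implicit Arguments. Unset Strict Implicit. Unset Printing Implicit Defensive.
Import Order.TTheory GRing.Theory Num.Theory.
Local Open Scope ring_scope.

(* [k]_q evaluates to k at q = 1, hence [k+1]_q is a nonzero polynomial. *)
Lemma qint_at1 k : (qint k).[1] = k%:R.
Proof.
rewrite /qint horner_sum (eq_bigr (fun=> 1)) => [|i _]; last by rewrite hornerXn expr1n.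
by rewrite sumr_const card_ord.
Qed.

Lemma qint_neq0 k : qint k.+1 != 0.
Proof.
apply/negP => /eqP q0; have := qint_at1 k.+1.
by rewrite q0 horner0 => /eqP; rewrite eq_sym pnatr_eq0.
Qed.

Lemma qfact_neq0 m : qfact m != 0.
Proof. by rewrite prodf_seq_neq0; apply/allP => i _; exact: qint_neq0. Qed.

Lemma qfactS m : qfact m.+1 = qfact m * qint m.+1.
Proof. by rewrite /qfact big_ord_recr. Qed.

Lemma qfact0 : qfact 0 = 1.
Proof. by rewrite /qfact big_ord0. Qed.

Lemma qint1 : qint 1 = 1.
Proof. by rewrite /qint big_ord1 expr0. Qed.

Lemma qintSr k : qint k.+1 = qint k + 'X^k.
Proof. by rewrite /qint big_ord_recr. Qed.

Lemma qintSl k : qint k.+1 = 1 + 'X * qint k.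
Proof.
rewrite /qint big_ord_recl expr0 mulr_sumr.
by congr (_ + _); apply: eq_bigr => i _; rewrite exprS.
Qed.

Lemma qfact1 : qfact 1 = 1.
Proof. by rewrite qfactS qfact0 qint1 mulr1. Qed.

Lemma qbin_gt m k : (m < k)%N -> qbin m k = 0.
Proof. by rewrite /qbin ltnNge => /negbTE ->. Qed.

Lemma qbin_sym m k : (k <= m)%N -> qbin m (m - k) = qbin m k.
Proof. by move=> km; rewrite /qbin leq_subr km subKn // mulrC. Qed.

Lemma qbin_exact m k p :
  (k <= m)%N -> qfact m = p * (qfact k * qfact (m - k)) -> qbin m k = p.
Proof. by move=> km fm; rewrite /qbin km fm mulpK // mulf_neq0 ?qfact_neq0. Qed.

Lemma qbin0 m : qbin m 0 = 1.
Proof. by apply: qbin_exact => //; rewrite qfact0 subn0 !mul1r. Qed.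

Lemma qbinn m : qbin m m = 1.
Proof. by rewrite -{2}(subn0 m) qbin_sym // qbin0. Qed.

Lemma qbin1 m : qbin m.+1 1 = qint m.+1.
Proof. by apply: qbin_exact => //; rewrite qfact1 subSS subn0 mul1r qfactS mulrC. Qed.

Lemma qbinSn m : qbin m.+1 m = qint m.+1.
Proof. by rewrite -(qbin_sym (leqnSn m)) subSnn qbin1. Qed.

(* [m+2 choose 2]_q, given by the Pascal-type expansion
   sum_(i <= m) q^i [i+1]_q. *)
Fixpoint qbin2 (m : nat) : {poly rat} :=
  if m is m'.+1 then qbin2 m' + 'X^m * qint m.+1 else 1.

Lemma qbin2E m : (1 + 'X) * qbin2 m = qint m.+1 * qint m.+2.
Proof.
elim: m => [|m IH] /=; first by rewrite mulr1 qint1 (qintSr 1) qint1 expr1 mul1r.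
rewrite mulrDr IH [qint m.+2 in LHS]qintSr [qint m.+3]qintSr.
rewrite [qint m.+2 in RHS]qintSr !exprS; ring.
Qed.

Lemma qbin2_qbin m : qbin m.+2 2 = qbin2 m.
Proof.
apply: qbin_exact => //; rewrite !subSS subn0 !qfactS qfact0 qint1.
rewrite (qintSr 1) qint1 expr1 -mulrA -qbin2E; ring.
Qed.

Lemma qbin_SSn m : qbin m.+2 m = qbin2 m.
Proof.
by rewrite -(qbin_sym (leqW (leqnSn m))) (_ : m.+2 - m = 2)%N ?qbin2_qbin //; lia.
Qed.

(* [k+1]_q is palindromic of degree k, and [m+2 choose 2]_q is palindromic of
   degree 2m; these drive the substitution q -> q^-1. *)
Lemma horner_qint_inv (x : rat) k : x != 0 ->
  (qint k.+1).[x^-1] = x^-1 ^+ k * (qint k.+1).[x].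
Proof.
move=> x0; elim: k => [|k IH]; first by rewrite qint1 !hornerC expr0 mul1r.
by rewrite [in LHS]qintSr [in RHS]qintSl !hornerE IH exprS; field.
Qed.

Lemma horner_qbin2_inv (x : rat) m : 0 < x ->
  (qbin2 m).[x^-1] = x^-1 ^+ (2 * m) * (qbin2 m).[x].
Proof.
move=> x_gt0; have x0 : x != 0 by rewrite gt_eqF.
have x1 : 1 + x^-1 != 0 by rewrite gt_eqF // ltr_wpDr ?invr_ge0 ?ltW.
have atx := congr1 (horner^~ x) (qbin2E m).
have atxV := congr1 (horner^~ x^-1) (qbin2E m).
rewrite /= !hornerE !horner_qint_inv // in atx atxV.
apply: (mulfI x1); rewrite atxV.
have -> : (1 + x^-1) * (x^-1 ^+ (2 * m) * (qbin2 m).[x]) =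
          x^-1 ^+ (2 * m).+1 * ((1 + x) * (qbin2 m).[x]) by rewrite exprS; field.
by rewrite atx mul2n -addnn exprS exprSr exprD; ring.
Qed.

Lemma size_qint k : (size (qint k) <= k)%N.
Proof.
elim: k => [|k IH]; first by rewrite /qint big_ord0 size_poly0.
rewrite qintSr (leq_trans (size_polyD _ _)) // geq_max size_polyXn leqnn andbT.
exact: leqW.
Qed.

Lemma size_qbin2 m : (size (qbin2 m) <= (2 * m).+1)%N.
Proof.
elim: m => [|m IH] /=; first by rewrite size_poly1.
rewrite (leq_trans (size_polyD _ _)) // geq_max (leq_trans IH) /=; last lia.
rewrite (leq_trans (size_polyMleq _ _)) // size_polyXn -subn1.
by have := size_qint m.+2; move: (size _) => s; lia.
Qed.

(* Reversal of a polynomial with respect to the degree bound N: this is how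
   htilde_n is obtained from h_n, with N = C(n, 2). *)
Definition rev_poly (R : nzRingType) (N : nat) (p : {poly R}) : {poly R} :=
  \poly_(i < N.+1) p`_(N - i).

Lemma horner_rev_poly (R : fieldType) N (p : {poly R}) x :
  (size p <= N.+1)%N -> x != 0 -> (rev_poly N p).[x] = x ^+ N * p.[x^-1].
Proof.
move=> sp x0; rewrite horner_poly (horner_coef_wide _ sp) mulr_sumr.
rewrite (reindex_inj rev_ord_inj); apply: eq_bigr => i _ /=.
have iN : (i <= N)%N by rewrite -ltnS.
have -> : x ^+ N = x ^+ (N - i) * x ^+ i by rewrite -exprD subnK.
by rewrite subSS subKn // exprVn; field; rewrite expf_neq0.
Qed.

Lemma rev_polyK (R : nzRingType) N (p : {poly R}) :
  (size p <= N.+1)%N -> rev_poly N (rev_poly N p) = p.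
Proof.
move=> sp; apply/polyP => k; rewrite !coef_poly ltnS.
case: ifP => kN; first by rewrite ltnS leq_subr subKn.
by apply/esym/(leq_sizeP _ _ sp); rewrite ltnNge kN.
Qed.

(* Polynomials over an ordered domain agreeing at all positive points are
   equal (they agree at the infinitely many points 1, 2, 3, ...). *)
Lemma poly_eq_pos (R : numDomainType) (p q : {poly R}) :
  (forall y, 0 < y -> p.[y] = q.[y]) -> p = q.
Proof.
move=> pq; apply/eqP; rewrite -subr_eq0; apply/negPn/negP => pq0.
set ys := [seq (i.+1)%:R : R | i <- iota 0 (size (p - q))].
have roots : all (root (p - q)) ys.
  by apply/allP => _ /mapP[i _ ->]; rewrite /root !hornerE pq ?subrr ?ltr0Sn.
have ys_uniq : uniq ys.
  by rewrite map_inj_uniq ?iota_uniq // => i j /eqP; rewrite eqr_nat => /eqP [].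
by have := max_poly_roots pq0 roots ys_uniq; rewrite size_map size_iota ltnn.
Qed.

Lemma fmul_constl c a n : fmul (fconst c) a n = c * a n.
Proof.
rewrite /fmul big_ord_recl subn0 big1 ?addr0 // => i _.
by rewrite /fconst /= mul0r.
Qed.

Lemma fmul_shiftl (a c b : fps) n :
  (forall k, a k = if k is k'.+1 then c k' else 0) ->
  fmul a b n = if n is n'.+1 then fmul c b n' else 0.
Proof.
move=> ac; rewrite /fmul; case: n => [|n]; first by rewrite big_ord1 ac mul0r.
rewrite big_ord_recl ac mul0r add0r; apply: eq_bigr => i _.
by rewrite ac subSS.
Qed.

Lemma fmul_sl (a : fps) n : fmul fs a n = if n is n'.+1 then a n' else 0.
Proof.
rewrite (@fmul_shiftl _ (fconst 1)) => [|[|[|k]] //].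
by case: n => // n; rewrite fmul_constl mul1r.
Qed.

Lemma fmul_ssl (a : fps) n :
  fmul (fmul fs fs) a n = if n is n'.+2 then a n' else 0.
Proof.
rewrite (@fmul_shiftl _ fs) => [|k]; last exact: fmul_sl.
by case: n => // n; rewrite fmul_sl.
Qed.

Section JFractionCoefficients.

Variables g l : nat -> {poly rat}.

Definition jfrac_rec (F : nat -> fps) : Prop :=
  forall m, [/\ F m 0%N = 1, F m 1%N = g m &
    forall L, F m L.+2 = g m * F m L.+1
                         + l m * \sum_(i < L.+1) F m i * F m.+1 (L - i)%N].

Lemma jfrac_system_coef (F : nat -> fps) m n :
  fmul (F m) (fsub (fsub (fconst 1) (fmul (fconst (g m)) fs))
                   (fmul (fconst (l m)) (fmul (fmul fs fs) (F m.+1)))) n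
  = match n with
    | 0 => F m 0%N
    | 1 => F m 1%N - g m * F m 0%N
    | L.+2 => F m L.+2 - g m * F m L.+1
              - l m * \sum_(i < L.+1) F m i * F m.+1 (L - i)%N
    end.
Proof.
set D := fsub _ _.
have Dk k : D k = fconst 1 k - g m * fs k - l m * if k is k'.+2 then F m.+1 k' else 0.
  by rewrite /D /fsub !fmul_constl fmul_ssl.
rewrite /fmul; case: n => [|[|L]].
- by rewrite big_ord1 Dk /fconst /fs /= !mulr0 !subr0 mulr1.
- by rewrite big_ord_recr big_ord1 !Dk /fconst /fs /= !mulr0 !subr0 sub0r; ring.
rewrite big_ord_recr big_ord_recr /= subnn subSnn !Dk /fconst /fs /=.
have Dsum (i : 'I_L.+1) : F m i * D (L.+2 - i)%N = - l m * (F m i * F m.+1 (L - i)%N).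
  by rewrite (_ : L.+2 - i = (L - i).+2)%N ?Dk /fconst /fs /=; [ring | have := ltn_ord i; lia].
rewrite (eq_bigr _ (fun i _ => Dsum i)) -mulr_sumr; ring.
Qed.

Lemma jfrac_systemP (F : nat -> fps) : jfrac_system g l F <-> jfrac_rec F.
Proof.
split=> [sysF m | recF m n]; last first.
  rewrite jfrac_system_coef; have [F0 F1 FS] := recF m.
  by case: n => [|[|L]] /=; rewrite /fconst ?F0 ?F1 ?FS ?mulr1 ?subrr //; ring.
have coef n := etrans (esym (jfrac_system_coef F m n)) (sysF m n).
have F0 : F m 0%N = 1 by exact: coef 0%N.
split=> // [|L].
  by have /eqP := coef 1%N; rewrite F0 mulr1 subr_eq0 => /eqP.
by have /eqP := coef L.+2; rewrite subr_eq0 subr_eq addrC => /eqP.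
Qed.

(* The recursion determines every coefficient, so tail systems are unique. *)
Lemma jfrac_rec_unique (F1 F2 : nat -> fps) :
  jfrac_rec F1 -> jfrac_rec F2 -> forall m n, F1 m n = F2 m n.
Proof.
move=> rec1 rec2 m n; elim: n {-2}n (leqnn n) m => [|N IH] [|[|L]] // ltLN m.
- by have [-> _ _] := rec1 m; have [-> _ _] := rec2 m.
- by have [-> _ _] := rec1 m; have [-> _ _] := rec2 m.
- by have [_ -> _] := rec1 m; have [_ -> _] := rec2 m.
have [_ _ ->] := rec1 m; have [_ _ ->] := rec2 m.
rewrite IH //; congr (_ + _ * _); apply: eq_bigr => i _.
by rewrite !IH //; have := ltn_ord i; lia.
Qed.

End JFractionCoefficients.

(* Weighted Motzkin paths: motzkin w L b is the total weight of the paths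
   0 = a_0, a_1, ..., a_L = b in the nonnegative integers with steps
   |a_(j+1) - a_j| <= 1, where the step at time j from a to a' weighs
   w j a a'. *)
Fixpoint motzkin (R : pzRingType) (w : nat -> nat -> nat -> R) (L b : nat) : R :=
  if L is L'.+1 then
    (if b is b'.+1 then motzkin w L' b' * w L' b' b else 0)
    + motzkin w L' b * w L' b b + motzkin w L' b.+1 * w L' b.+1 b
  else (b == 0)%:R.

Section MotzkinPaths.

Variable R : pzRingType.
Implicit Types w : nat -> nat -> nat -> R.

Lemma motzkin_gt w L b : (L < b)%N -> motzkin w L b = 0.
Proof.
elim: L b => [|L IH] [|b] //= Lb.
by rewrite !IH ?mul0r ?addr0 //; lia.
Qed.

Lemma motzkin_map (S : pzRingType) (f : {rmorphism R -> S}) w L b :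
  f (motzkin w L b) = motzkin (fun j a c => f (w j a c)) L b.
Proof.
elim: L b => [|L IH] b /=; first exact: rmorph_nat.
by case: b => [|b]; rewrite !rmorphD !rmorphM ?rmorph0 !IH.
Qed.

End MotzkinPaths.

Lemma motzkin_gauge (R : comPzRingType) (c : nat -> nat -> R)
    (w w' : nat -> nat -> nat -> R) :
  (forall j a b, (a <= j)%N -> (b <= a.+1)%N -> (a <= b.+1)%N ->
     c j a * w' j a b = w j a b * c j.+1 b) ->
  forall L b, c 0%N 0%N * motzkin w' L b = motzkin w L b * c L b.
Proof.
move=> cw; elim=> [|L IH] b; first by case: b => [|b]; rewrite /= ?mulr1 ?mul1r ?mulr0 ?mul0r.
have step a : (b <= a.+1)%N -> (a <= b.+1)%N ->
    c 0%N 0%N * (motzkin w' L a * w' L a b) = motzkin w L a * w L a b * c L.+1 b.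
  move=> ba ab; case: (leqP a L) => aL; last by rewrite !motzkin_gt // !mul0r mulr0.
  by rewrite mulrA IH -[_ * c L a * _]mulrA cw // mulrA.
by case: b step => [|b] step /=; rewrite !mulrDr !mulrDl ?mulr0 ?mul0r !step //; lia.
Qed.

Lemma size_motzkin (R : nzRingType) (w : nat -> nat -> nat -> {poly R})
    (D : nat -> nat -> nat) :
  (forall j a b, (a <= j)%N -> (b <= a.+1)%N -> (a <= b.+1)%N ->
     (size (w j a b) + D j a <= (D j.+1 b).+1)%N) ->
  forall L b, (size (motzkin w L b) <= (D L b).+1)%N.
Proof.
move=> wD; elim=> [|L IH] b; first by case: b => [|b]; rewrite /= ?size_poly1 ?size_poly0.
have step a : (b <= a.+1)%N -> (a <= b.+1)%N ->
    (size (motzkin w L a * w L a b)%R <= (D L.+1 b).+1)%N.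
  move=> ba ab; case: (leqP a L) => aL; last by rewrite motzkin_gt // mul0r size_poly0.
  apply: leq_trans (size_polyMleq _ _) _; have := IH a; have := wD L a b aL ba ab.
  by move: (size _) (size _) => s t; lia.
have sizeD n (p q : {poly R}) : (size p <= n -> size q <= n -> size (p + q)%R <= n)%N.
  by move=> pn qn; rewrite (leq_trans (size_polyD _ _)) // geq_max pn.
case: b step => [|b] step /=; apply: (sizeD); try apply: (sizeD);
  by rewrite ?size_poly0 ?step //; lia.
Qed.

Definition tridiagonal (R : pzRingType) (w : nat -> nat -> nat -> R) : Prop :=
  forall j a b, (a.+1 < b)%N || (b.+1 < a)%N -> w j a b = 0.

Lemma sum_ord_tridiagonal (V : nmodType) K b (g : nat -> V) : (b < K)%N ->
  (forall c, (c.+1 < b)%N || (b.+1 < c)%N -> g c = 0) -> g K = 0 ->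
  \sum_(c < K) g c = (if b is b'.+1 then g b' else 0) + g b + g b.+1.
Proof.
move=> bK g_far gK; rewrite -(big_mkord xpredT).
have -> : \sum_(0 <= c < K) g c = \sum_(0 <= c < K.+1) g c.
  by rewrite big_nat_recr //= gK addr0.
rewrite (big_cat_nat _ (n := b.+2)) //=.
rewrite [X in _ + X]big1_seq ?addr0 => [|c /andP[_]]; last first.
  by rewrite mem_index_iota => /andP[bc _]; rewrite g_far ?bc ?orbT.
case: b bK g_far => [|b] _ g_far; first by rewrite !big_nat_recr //= big_geq // add0r.
rewrite !big_nat_recr //= big1_seq ?add0r // => c /andP[_].
by rewrite mem_index_iota => /andP[_ cb]; rewrite g_far ?ltnS ?cb.
Qed.

Lemma motzkinS_sum (R : pzRingType) (w : nat -> nat -> nat -> R) K L b :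
  tridiagonal w -> (L < K)%N -> (b < K)%N ->
  motzkin w L.+1 b = \sum_(c < K) motzkin w L c * w L c b.
Proof.
move=> wtri LK bK; rewrite (@sum_ord_tridiagonal _ K b (fun c => motzkin w L c * w L c b)) //=.
- by move=> c cb; rewrite wtri ?mulr0.
- by rewrite motzkin_gt ?mul0r.
Qed.

Definition ext L K (g : {ffun 'I_L -> 'I_K}) (c : 'I_K) : {ffun 'I_L.+1 -> 'I_K} :=
  [ffun i => if unlift ord_max i is Some j then g j else c].

Lemma fv_ext L K (g : {ffun 'I_L -> 'I_K}) c k :
  fv (ext g c) k = if k == L.+1 then nat_of_ord c else fv g k.
Proof.
case: k => [|k] //=; rewrite eqSS; case: (ltngtP k L) => [kL|Lk|->].
- have kL1 : (k < L.+1)%N by rewrite ltnW.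
  rewrite (insubT (fun i => i < L)%N kL) (insubT (fun i => i < L.+1)%N kL1) ffunE.
  rewrite (_ : Sub k kL1 = lift ord_max (Ordinal kL)) ?liftK //.
  by apply: val_inj; rewrite /= /bump leqNgt kL.
- by rewrite !insubF // ltnNge ?(ltnW Lk) ?Lk.
- have LL1 : (L < L.+1)%N by [].
  rewrite (insubT (fun i => i < L.+1)%N LL1) ffunE.
  by rewrite (_ : Sub L _ = ord_max) ?unlift_none //; exact: val_inj.
Qed.

Lemma sum_ffun_ext (V : nmodType) L K (F : {ffun 'I_L.+1 -> 'I_K} -> V) :
  \sum_f F f = \sum_(g : {ffun 'I_L -> 'I_K}) \sum_(c : 'I_K) F (ext g c).
Proof.
rewrite pair_big (reindex (fun p => ext p.1 p.2)) //=.
exists (fun f => ([ffun j => f (lift ord_max j)], f ord_max)) => [[g c] _ | f _].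
  by congr (_, _); [apply/ffunP => j; rewrite !ffunE liftK | rewrite ffunE unlift_none].
by apply/ffunP => i; rewrite ffunE; case: unliftP => [j ->|->]; rewrite ?ffunE.
Qed.

Lemma sum_ffun_motzkin (R : pzRingType) (w : nat -> nat -> nat -> R) K L b :
  tridiagonal w -> (L < K)%N -> (b < K)%N ->
  \sum_(f : {ffun 'I_L -> 'I_K})
     (\prod_(j < L) w j (fv f j) (fv f j.+1)) * w L (fv f L) b = motzkin w L.+1 b.
Proof.
move=> wtri; elim: L b => [|L IH] b LK bK; rewrite (motzkinS_sum wtri LK bK).
  rewrite (big_pred1 (ffun0 (card_ord 0))) => [|f]; last first.
    by apply/esym/eqP/ffunP => [[]].
  case: K LK bK => // K _ _; rewrite big_ord0 mul1r big_ord_recl big1 => [|c _].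
    by rewrite addr0 mul1r.
  by rewrite mul0r.
rewrite sum_ffun_ext exchange_big; apply: eq_bigr => c _.
rewrite -(IH c (ltnW LK) (ltn_ord c)) mulr_suml; apply: eq_bigr => g _.
rewrite big_ord_recr !fv_ext eqxx (ltn_eqF (ltnSn L)); congr (_ * _ * _).
apply: eq_bigr => j _; have jL := ltn_ord j.
by rewrite !fv_ext eqSS (ltn_eqF jL) (ltn_eqF (ltn_trans jL (ltnSn L))).
Qed.

(* Jacobi weights: time-independent weights gw, uw, dw of the level, up and
   down steps, for paths based at height m. *)
Definition jweight (R : pzRingType) (gw uw dw : nat -> R) (m : nat) :
    nat -> nat -> nat -> R :=
  fun _ a b => if b == a then gw (m + a) else if b == a.+1 then uw (m + a)
               else if a == b.+1 then dw (m + b) else 0.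

Section JacobiWeights.

Variables (R : pzRingType) (gw uw dw : nat -> R) (m j a : nat).

Lemma jweight_level : jweight gw uw dw m j a a = gw (m + a).
Proof. by rewrite /jweight eqxx. Qed.

Lemma jweight_up : jweight gw uw dw m j a a.+1 = uw (m + a).
Proof. by rewrite /jweight gtn_eqF // eqxx. Qed.

Lemma jweight_down : jweight gw uw dw m j a.+1 a = dw (m + a).
Proof. by rewrite /jweight (ltn_eqF (ltnSn a)) (ltn_eqF (leqW (ltnSn a))) eqxx. Qed.

End JacobiWeights.

Section JacobiPaths.

Variables (R : comNzRingType) (gw uw dw : nat -> R).
Local Notation P m := (motzkin (jweight gw uw dw m)).

Lemma motzkin_jweightS m L b : P m L.+1 b =
  P m L b * gw (m + b) + (if b is b'.+1 then P m L b' * uw (m + b') else 0)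
  + P m L b.+1 * dw (m + b).
Proof.
rewrite /= jweight_level jweight_down.
by case: b => [|b]; rewrite ?jweight_up; ring.
Qed.

(* First-passage decomposition: a path ending at height b+1 leaves height 0
   for the last time at some time j, through an up step, and then stays at
   height >= 1. *)
Lemma motzkin_first_passage m L b :
  P m L b.+1 = \sum_(j < L) P m j 0 * uw m * P m.+1 (L - j.+1) b.
Proof.
elim: L b => [|L IH] b; first by rewrite big_ord0.
rewrite motzkin_jweightS big_ord_recr subnn.
under eq_bigr => j _ do rewrite subSS -(subnSK (ltn_ord j)) motzkin_jweightS.
rewrite !IH; case: b => [|b]; rewrite ?IH !mulr_suml.
  rewrite addrAC -big_split /= mulr1 addn0; congr (_ + _).
  by apply: eq_bigr => j _; rewrite addSnnS; ring.
rewrite -!big_split /= mulr0 addr0; apply: eq_bigr => j _.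
by rewrite !addSnnS; ring.
Qed.

End JacobiPaths.

Lemma jfrac_rec_motzkin (gw uw dw l : nat -> {poly rat}) :
  (forall k, l k = uw k * dw k) ->
  jfrac_rec gw l (fun m n => motzkin (jweight gw uw dw m) n 0).
Proof.
move=> lE m; split=> // [|L].
  by rewrite motzkin_jweightS /= addn0 mul1r mul0r !addr0.
rewrite motzkin_jweightS motzkin_first_passage addn0 addr0 mulr_suml lE mulr_sumr.
congr (_ + _); first exact: mulrC.
by apply: eq_bigr => i _; rewrite subSS; ring.
Qed.

(* The weights of the Cerulli Irelli-Feigin-Reineke formula, as weights of
   the step f_j -> f_(j+1) at time j. *)
Definition cfr_weight (j a b : nat) : {poly rat} :=
  'X^((j - a) * (1 + b - a)) * (qbin (1 + a) b * qbin (1 + b) a).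

Lemma cfr_weight_tridiagonal : tridiagonal cfr_weight.
Proof.
move=> j a b /orP[ab | ba]; rewrite /cfr_weight.
  by rewrite (@qbin_gt (1 + a) b) ?mul0r ?mulr0.
by rewrite (@qbin_gt (1 + b) a) ?mulr0.
Qed.

Lemma fv_last L K (f : {ffun 'I_L -> 'I_K}) : fv f L.+1 = 0%N.
Proof. by rewrite /fv insubF // ltnn. Qed.

Lemma cfr_summand L (f : {ffun 'I_L -> 'I_L.+1}) :
  'X^(@hexp L.+1 f) * \prod_(k < L) (qbin (1 + fv f k) (fv f k.+1)
                                    * qbin (1 + fv f k.+2) (fv f k.+1))
  = \prod_(j < L.+1) cfr_weight j (fv f j) (fv f j.+1).
Proof.
have hexpE : (\sum_(j < L.+1) (j - fv f j) * (1 + fv f j.+1 - fv f j))%N = @hexp L.+1 f.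
  by rewrite big_ord_recl /= mul0n add0n.
have up : \prod_(j < L.+1) qbin (1 + fv f j) (fv f j.+1) =
          \prod_(k < L) qbin (1 + fv f k) (fv f k.+1).
  by rewrite big_ord_recr fv_last qbin0 Monoid.mulm1.
have down : \prod_(j < L.+1) qbin (1 + fv f j.+1) (fv f j) =
            \prod_(k < L) qbin (1 + fv f k.+2) (fv f k.+1).
  by rewrite big_ord_recl qbin0 Monoid.mul1m.
by rewrite /cfr_weight !big_split prodrXr hexpE up down.
Qed.

Lemma h_motzkin n : h n = motzkin cfr_weight n 0.
Proof.
case: n => [|L].
  rewrite /h (big_pred1 (ffun0 (card_ord 0))) => [|f]; last first.
    by apply/esym/eqP/ffunP => [[]].
  by rewrite /hexp !big_ord0 mulr1.
rewrite /h -(sum_ffun_motzkin cfr_weight_tridiagonal (ltnSn L)) //.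
by apply: eq_bigr => f _; rewrite cfr_summand big_ord_recr fv_last.
Qed.

(* The Jacobi weights of the theorem: gamma_a, q [a+2 choose 2]_q and
   [a+2 choose 2]_q, whose products of up and down weights are lambda_a. *)
Definition qjweight : nat -> nat -> nat -> nat -> {poly rat} :=
  jweight gam (fun k => 'X * qbin2 k) qbin2.

Lemma lam_split k : lam k = 'X * qbin2 k * qbin2 k.
Proof. by rewrite /lam qbin2_qbin expr2 mulrA. Qed.

Lemma cfr_qjweight_gauge (x : rat) : 0 < x -> forall j a b,
  (a <= j)%N -> (b <= a.+1)%N -> (a <= b.+1)%N ->
  x ^+ 'C(a, 2) / x ^+ ('C(j, 2) + j * a) * (cfr_weight j a b).[x^-1]
  = (qjweight 0 j a b).[x] * (x ^+ 'C(b, 2) / x ^+ ('C(j.+1, 2) + j.+1 * b)).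
Proof.
move=> x_gt0 j a b aj ba ab; have x0 : x != 0 by rewrite gt_eqF.
have xn0 n : x ^+ n != 0 by rewrite expf_neq0.
rewrite binS bin1 mulSn /cfr_weight !add1n !hornerM hornerXn.
have [->|[->|->]] : b = a \/ b = a.+1 \/ a = b.+1 by lia.
- rewrite /qjweight jweight_level add0n qbinSn /gam qbin1 horner_exp horner_qint_inv //.
  rewrite (_ : 'C(j, 2) + j + (a + j * a) = 'C(j, 2) + j * a + (j - a) + a + a)%N.
    by rewrite subSnn muln1 !exprD !exprVn; field; rewrite ?x0 !xn0.
  by lia.
- rewrite /qjweight jweight_up add0n qbinn qbin_SSn horner_qbin2_inv // hornerM hornerX.
  rewrite hornerC mul1r binS bin1 (_ : a.+2 - a = 2)%N; last by lia.
  rewrite (_ : 'C(j, 2) + j + (a.+1 + j * a.+1) =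
               'C(j, 2) + j * a + (j - a) * 2 + 2 * a + a + 1)%N; last by lia.
  by rewrite !exprD !exprVn expr1; field; rewrite ?x0 !xn0.
- rewrite /qjweight jweight_down add0n qbin_SSn qbinn horner_qbin2_inv // hornerC.
  rewrite subnn muln0 mulr1 binS bin1 mulnS.
  by rewrite !exprD !exprVn expr0 mul1r; field; rewrite ?x0 !xn0.
Qed.

Lemma size_qjweight_motzkin L : (size (motzkin (qjweight 0) L 0) <= 'C(L, 2).+1)%N.
Proof.
suff : (size (motzkin (qjweight 0) L 0) <= ('C(L, 2) + L * 0 - 'C(0, 2)).+1)%N.
  by rewrite muln0 addn0 bin0n subn0.
apply: (@size_motzkin _ _ (fun j a => 'C(j, 2) + j * a - 'C(a, 2))%N) => j a b aj ba ab.
have Caj := leq_bin2l 2 aj; rewrite /qjweight binS bin1.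
have [?|[?|?]] : b = a \/ b = a.+1 \/ a = b.+1 by lia.
- subst b; have : (size (gam a) <= (2 * a).+1)%N.
    rewrite /gam qbin1 expr2 (leq_trans (size_polyMleq _ _)) //.
    by have := size_qint a.+1; move: (size _) => s; lia.
  by rewrite jweight_level add0n; move: (size _) => s; lia.
- subst b; have : (size ('X * qbin2 a)%R <= (2 * a).+2)%N.
    rewrite (leq_trans (size_polyMleq _ _)) // size_polyX.
    by have := size_qbin2 a; move: (size _) => s; lia.
  by rewrite jweight_up add0n binS bin1; move: (size _) => s; lia.
- subst a; have := size_qbin2 b; rewrite jweight_down add0n binS bin1 in Caj *.
  by move: (size _) => s; lia.
Qed.

Lemma h_eval_inv (x : rat) n : 0 < x ->
  (h n).[x^-1] = (motzkin (qjweight 0) n 0).[x] / x ^+ 'C(n, 2).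
Proof.
move=> x_gt0; rewrite h_motzkin -!horner_evalE !motzkin_map.
have := @motzkin_gauge _ (fun j a => x ^+ 'C(a, 2) / x ^+ ('C(j, 2) + j * a))
  _ _ (cfr_qjweight_gauge x_gt0) n 0.
by rewrite (bin0n 2) !muln0 !addn0 expr0 divr1 !mul1r => ->.
Qed.

Lemma htilde_motzkin n : htilde n = motzkin (qjweight 0) n 0.
Proof.
have -> : htilde n = rev_poly 'C(n, 2) (h n) by rewrite /htilde bin2 divn2.
suff -> : h n = rev_poly 'C(n, 2) (motzkin (qjweight 0) n 0).
  exact/rev_polyK/size_qjweight_motzkin.
apply: poly_eq_pos => y y_gt0; have yV_gt0 : 0 < y^-1 by rewrite invr_gt0.
rewrite horner_rev_poly ?size_qjweight_motzkin ?gt_eqF //.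
by rewrite -[y in LHS]invrK h_eval_inv // exprVn invrK mulrC.
Qed.

Theorem theorem3p2 :
  (exists F : nat -> fps, jfrac_system gam lam F) /\
  (forall F : nat -> fps, jfrac_system gam lam F ->
     forall n : nat, F 0%N n = htilde n).
Proof.
have recP : jfrac_rec gam lam (fun m n => motzkin (qjweight m) n 0).
  exact: jfrac_rec_motzkin lam_split.
split; first by exists (fun m n => motzkin (qjweight m) n 0); apply/jfrac_systemP.
move=> F /jfrac_systemP recF n; rewrite htilde_motzkin.
exact: jfrac_rec_unique recF recP 0%N n.
Qed.
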